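(* Let $\varphi\colon\mathbb{R}_+\to\mathbb{R}_+$ be a continuous, sublinear and increasing function. Let $\ell\ge1$ be an integer, $(X,\mu)$ a probability space, and $f_1,\dots,f_\ell\colon X\to\mathbb{N}$ measurable maps with $\int_X\varphi(f_i(x))\,d\mu(x)<+\infty$ for every $i\in\{1,\dots,\ell\}$. Then there exists a subadditive map $\psi\colon\mathbb{R}_+\to\mathbb{R}_+$ with $\psi(0)=0$ such that $\psi$ and $t\mapsto t/\psi(t)$ are non-decreasing, and (1) $\varphi(x_k)=o(\psi(x_k))$ as $k\to\infty$ for some increasing sequence $(x_k)_{k\ge0}$ of non-negative real numbers tending to $+\infty$; (2) $\int_X\psi(f_i(x))\,d\mu(x)<+\infty$ for every $i\in\{1,\dots,\ell\}$.
   Context: A function $\varphi$ is sublinear if $\varphi(t)=o(t)$ as $t\to+\infty$. *)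

From HB Require Import structures.
From mathcomp Require Import all_boot all_order all_algebra.
From mathcomp Require Import all_classical all_reals all_analysis.
Set Implicit Arguments. Unset Strict Implicit. Unset Printing Implicit Defensive.
Import Order.TTheory GRing.Theory Num.Theory.
Import numFieldNormedType.Exports.
Local Open Scope classical_set_scope.
Local Open Scope ring_scope.

Definition littleo_along {T : Type} {R : realType} (F : set_system T)
  (f g : T -> R) : Prop :=
  forall e : R, 0 < e -> \forall x \near F, `|f x| <= e * `|g x|.

Definition sublinear {R : realType} (phi : R -> R) : Prop :=
  littleo_along (+oo%R : set_system R) phi id.

Definition subadditive_nonneg {R : realType} (psi : R -> R) : Prop :=
  forall s t : R, 0 <= s -> 0 <= t -> psi (s + t) <= psi s + psi t.

(* psi is a series of concave ramps, psi t = sum_k c_k min(t, N_k), so it inherits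
   subadditivity and the monotonicity of psi and of t / psi t from its terms.  The
   breakpoints N_k increase and each is a record low of the slope phi(n)/n on [1, N_k];
   such records exist arbitrarily far out, with arbitrarily small slope s_k, because
   phi(n)/n -> 0.  Take c_k = (k+1) s_k: the k-th term at N_k equals (k+1) phi(N_k),
   whence phi = o(psi) along (N_k).  On integers the record property gives
   c_k min(n, N_k) <= (k+1) min(s_k n, phi n), and by dominated convergence s_k can be
   chosen so small that min(s_k f_i, phi o f_i) has integral at most 1/((k+1) 2^(k+1))
   and c_k <= 2^-(k+1); summing, psi is finite and psi o f_i has integral at most 1. *)

From HB Require Import structures.
From mathcomp Require Import all_boot all_order all_algebra.
From mathcomp Require Import all_classical all_reals all_analysis.
From mathcomp Require Import measurable_realfun lra.
Import Order.TTheory GRing.Theory Num.Theory.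
Import numFieldNormedType.Exports.
Local Open Scope classical_set_scope.
Local Open Scope ring_scope.

Lemma nat_argmin_le {d} {T : orderType d} (g : nat -> T) (M : nat) :
  exists2 Q, (Q <= M)%N & forall n, (n <= M)%N -> (g Q <= g n)%O.
Proof.
elim: M => [|M [Q QM gQ]]; first by exists 0%N => // n; rewrite leqn0 => /eqP->.
have [gQM|gMQ] := leP (g Q) (g M.+1).
  by exists Q => [|n]; [exact: leqW | rewrite leq_eqVlt ltnS => /predU1P[->|/gQ]].
exists M.+1 => // n; rewrite leq_eqVlt ltnS => /predU1P[->//|/gQ].
exact/le_trans/ltW.
Qed.

Lemma increasing_choice (Q : nat -> nat -> Prop) :
  (forall k P, exists2 N, (P < N)%N & Q k N) ->
  exists N : nat -> nat,
    [/\ forall k, (k < N k)%N, forall k, (N k < N k.+1)%N & forall k, Q k (N k)].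
Proof.
move=> exQ; have /choice[g gP] k : exists g : nat -> nat,
    forall P, (P < g P)%N /\ Q k (g P).
  have /choice[h hP] P : exists N, (P < N)%N /\ Q k N.
    by have [N PN QN] := exQ k P; exists N.
  by exists h.
pose N := nat_rect (fun=> nat) (g 0%N 0%N) (fun k Nk => g k.+1 Nk).
have N_incr k : (N k < N k.+1)%N by have [] := gP k.+1 (N k).
exists N; split => // [|[|k]]; last 2 first.
- by have [] := gP 0%N 0%N.
- by have [] := gP k.+1 (N k).
by elim=> [|k IH]; [have [] := gP 0%N 0%N | exact: leq_ltn_trans IH (N_incr k)].
Qed.

Lemma natr_dominating_cvgy {R : realType} (u : nat -> nat) :
  (forall k, (k <= u k)%N) -> ((u k)%:R : R) @[k --> \oo] --> +oo.
Proof.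
move=> ku; apply/cvgryPge => A; near=> k; apply: le_trans (_ : k%:R <= _).
  by near: k; exact: (cvgryPge _).1 (@cvgr_idn R) A.
by rewrite ler_nat.
Unshelve. all: by end_near.
Qed.

Lemma min_subadditive (R : realDomainType) (s t a : R) : 0 <= s -> 0 <= t -> 0 <= a ->
  Num.min (s + t) a <= Num.min s a + Num.min t a.
Proof.
move=> s0 t0 a0; rewrite ge_min.
by have [sa|sa] := leP s a; have [ta|ta] := leP t a; apply/orP; [left|right..]; lra.
Qed.

Lemma min_ratio_le (R : realDomainType) (s t a : R) : 0 < s -> s <= t -> 0 <= a ->
  s * Num.min t a <= t * Num.min s a.
Proof.
by move=> s0 st a0; have [ta|ta] := leP t a; have [sa|sa] := leP s a; nra.
Qed.

Lemma measurable_EFin_comp_nat {R : realType} {d} {X : measurableType d}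
  (g : X -> nat) (h : nat -> R) :
  measurable_fun setT g -> measurable_fun setT (fun x => (h (g x))%:E).
Proof. by move=> mg; apply/measurable_EFinP/(measurableT_comp _ mg). Qed.

Section Slope.
Context {R : realType} {phi : R -> R}.
Hypothesis phi_nonneg : forall t : R, 0 <= t -> 0 <= phi t.
Hypothesis phi_incr : {in `[0, +oo[ &, forall s t : R, s < t -> phi s < phi t}.

Lemma phi_le (s t : R) : 0 <= s -> s <= t -> phi s <= phi t.
Proof.
move=> s0; rewrite le_eqVlt => /predU1P[->//|st].
apply/ltW/phi_incr; rewrite ?in_itv /= ?andbT //.
exact: le_trans s0 (ltW st).
Qed.

Lemma phi_gt0 (t : R) : 0 < t -> 0 < phi t.
Proof.
move=> t0; apply: le_lt_trans (phi_nonneg 0 (lexx 0)) _.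
by apply: phi_incr; rewrite ?in_itv /= ?lexx ?ltW.
Qed.

Definition slope (n : nat) : R := phi n%:R / n%:R.

Definition slope_record (N : nat) : Prop :=
  forall n, (0 < n <= N)%N -> slope N <= slope n.

Lemma slope_gt0 n : (0 < n)%N -> 0 < slope n.
Proof. by move=> n0; rewrite divr_gt0 ?phi_gt0 ?ltr0n. Qed.

Lemma slope_cvg0 : sublinear phi -> slope n @[n --> \oo] --> 0.
Proof.
move=> phi_sublin; apply/cvgrPdist_le => e e0.
near=> n; rewrite sub0r normrN normf_div ler_pdivrMr ?normr_gt0 ?pnatr_eq0 -?lt0n.
- by near: n; exact: cvgr_idn (phi_sublin e e0).
- by near: n; exists 1%N.
Unshelve. all: by end_near.
Qed.

Lemma exists_slope_record : sublinear phi ->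
  forall (delta : R) (P : nat), 0 < delta ->
  exists2 N, (P < N)%N & slope N <= delta /\ slope_record N.
Proof.
move=> phi_sublin delta P delta0.
(* A minimiser of the slope on [1, M], where the slope at M is below every slope
   on [1, P + 1], lies beyond P + 1. *)
have [Q0 Q0P minQ0] := nat_argmin_le (fun n => slope n.+1) P.
have m0 : 0 < Num.min delta (slope Q0.+1) by rewrite lt_min delta0 slope_gt0.
have [M [slopeM M0]] := filter_ex
  (filterI (cvgr_lt _ (slope_cvg0 phi_sublin) _ m0) (nbhs_infty_gt 0%N)).
have [Q QM minQ] := nat_argmin_le (fun n => slope n.+1) M.-1.
have : slope Q.+1 < Num.min delta (slope Q0.+1).
  by apply: le_lt_trans slopeM; have := minQ M.-1 (leqnn _); rewrite prednK.
rewrite lt_min => /andP[Q_delta Q_Q0].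
exists Q.+1; last split.
- rewrite ltnS leqNgt; apply/negP => QP.
  by have := lt_le_trans Q_Q0 (minQ0 Q (ltnW QP)); rewrite ltxx.
- exact: ltW.
- by case=> // n /andP[_]; rewrite ltnS => nQ; apply: minQ; exact: leq_trans nQ QM.
Qed.

Lemma slope_record_ramp_le {N : nat} : (0 < N)%N -> slope_record N ->
  forall n : nat, slope N * Num.min n%:R N%:R <= Num.min (n%:R * slope N) (phi n%:R).
Proof.
move=> N_gt0 recN n; rewrite le_min; apply/andP; split.
  by rewrite mulrC ler_wpM2r ?ge_min ?lexx // ltW // slope_gt0.
have [nN|Nn] := leP n%:R N%:R.
  case: n nN => [|n] nN; first by rewrite mulr0 phi_nonneg.
  by rewrite -ler_pdivlMr ?ltr0n //; apply: (recN n.+1); rewrite ltn0Sn -(ler_nat R).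
rewrite /slope divfK ?gt_eqF ?ltr0n //.
by apply: phi_le (ltW Nn).
Qed.

End Slope.

Arguments slope {R} phi n.
Arguments slope_record {R} phi N.

Section RampSum.
Context {R : realType} {c N : nat -> R}.
Hypotheses (c_gt0 : forall k, 0 < c k) (N_gt0 : forall k, 0 < N k).
Hypothesis c_summable : (\sum_(k <oo) (c k)%:E < +oo)%E.

Definition ramp (k : nat) (t : R) : R := c k * Num.min t (N k).

(* [fine] sends a divergent series to 0; [ramp_sum_fin] excludes this for t >= 0. *)
Definition ramp_sum (t : R) : R := fine (\sum_(k <oo) (ramp k t)%:E)%E.

Lemma ramp_ge0 k (t : R) : 0 <= t -> 0 <= ramp k t.
Proof. by move=> t0; apply: mulr_ge0; rewrite ?le_min ?t0 ltW. Qed.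

Lemma ramp_le_mono k (s t : R) : s <= t -> ramp k s <= ramp k t.
Proof. by move=> st; apply: ler_wpM2l; [exact: ltW | exact: le_min2]. Qed.

Lemma ramp_le k (t : R) : ramp k t <= c k * t.
Proof. by apply: ler_wpM2l; [exact: ltW | rewrite ge_min lexx]. Qed.

Lemma ramp_sum_fin (t : R) : 0 <= t -> (\sum_(k <oo) (ramp k t)%:E)%E \is a fin_num.
Proof.
move=> t0; rewrite ge0_fin_numE ?nneseries_ge0 // => [|k _ _]; last first.
  by rewrite lee_fin ramp_ge0.
apply: le_lt_trans (_ : (\sum_(k <oo) (t%:E * (c k)%:E) < +oo)%E).
  apply: lee_nneseries => [k _ _|k _]; first by rewrite lee_fin ramp_ge0.
  by rewrite -EFinM lee_fin mulrC ramp_le.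
by rewrite nneseriesZl => [|k _]; [apply: lte_mul_pinfty | rewrite lee_fin ltW].
Qed.

Lemma ramp_sumE (t : R) : 0 <= t -> (ramp_sum t)%:E = (\sum_(k <oo) (ramp k t)%:E)%E.
Proof. by move=> t0; rewrite fineK ?ramp_sum_fin. Qed.

Lemma ramp_sum_ge0 (t : R) : 0 <= t -> 0 <= ramp_sum t.
Proof.
move=> t0; rewrite -lee_fin ramp_sumE // nneseries_ge0 // => k _ _.
by rewrite lee_fin ramp_ge0.
Qed.

Lemma ramp_sum0 : ramp_sum 0 = 0.
Proof.
rewrite /ramp_sum eseries0 // => k _ _.
by rewrite /ramp (min_l (ltW (N_gt0 k))) mulr0.
Qed.

Lemma ramp_le_sum k (t : R) : 0 <= t -> ramp k t <= ramp_sum t.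
Proof.
move=> t0; rewrite -lee_fin ramp_sumE // (nneseriesD1 (n:=k)) => [|n _|//]; last first.
  by rewrite lee_fin ramp_ge0.
by rewrite leeDl // nneseries_ge0 // => n _ _; rewrite lee_fin ramp_ge0.
Qed.

Lemma ramp_sum_gt0 (t : R) : 0 < t -> 0 < ramp_sum t.
Proof.
move=> t0; apply: lt_le_trans (ramp_le_sum 0%N _ (ltW t0)).
by rewrite /ramp mulr_gt0 // lt_min t0 N_gt0.
Qed.

Lemma ramp_sum_subadditive : subadditive_nonneg ramp_sum.
Proof.
move=> s t s0 t0; rewrite -lee_fin EFinD !ramp_sumE ?addr_ge0 //.
rewrite -nneseriesD => [|k _ _|k _ _]; try by rewrite lee_fin ramp_ge0.
apply: lee_nneseries => [k _ _|k _]; first by rewrite lee_fin ramp_ge0 ?addr_ge0.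
rewrite -EFinD lee_fin /ramp -mulrDr; apply: ler_wpM2l; first exact: ltW.
by apply: min_subadditive => //; exact: ltW.
Qed.

Lemma ramp_sum_le_mono :
  {in `[0, +oo[ &, forall s t, s <= t -> ramp_sum s <= ramp_sum t}.
Proof.
move=> s t; rewrite !in_itv /= !andbT => s0 t0 st.
rewrite -lee_fin !ramp_sumE //; apply: lee_nneseries => [k _ _|k _].
  by rewrite lee_fin ramp_ge0.
by rewrite lee_fin ramp_le_mono.
Qed.

Lemma ramp_sum_ratio_le_mono :
  {in `]0, +oo[ &, forall s t, s <= t -> s / ramp_sum s <= t / ramp_sum t}.
Proof.
move=> s t; rewrite !in_itv /= !andbT => s0 t0 st.
rewrite ler_pdivrMr ?ramp_sum_gt0 // mulrAC ler_pdivlMr ?ramp_sum_gt0 //.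
have [s0' t0'] := (ltW s0, ltW t0).
rewrite -lee_fin !EFinM !ramp_sumE // -!nneseriesZl => [|k _|k _];
  try by rewrite lee_fin ramp_ge0.
apply: lee_nneseries => [k _ _|k _]; first by rewrite -EFinM lee_fin mulr_ge0 ?ramp_ge0.
rewrite -!EFinM lee_fin /ramp mulrCA [t * _]mulrCA; apply: ler_wpM2l; first exact: ltW.
by apply: min_ratio_le => //; exact: ltW.
Qed.

Lemma integral_ramp_sum {d} {X : measurableType d} (mu : {measure set X -> \bar R})
  (g : X -> nat) : measurable_fun setT g ->
  (\int[mu]_x (ramp_sum (g x)%:R)%:E = \sum_(k <oo) \int[mu]_x (ramp k (g x)%:R)%:E)%E.
Proof.
move=> mg; under eq_integral do rewrite ramp_sumE //.
apply: (@integral_nneseries _ _ _ _ _ measurableT (fun k x => (ramp k (g x)%:R)%:E))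
  => [k|k x _]; first exact: (measurable_EFin_comp_nat _ (fun n => ramp k n%:R) mg).
by rewrite lee_fin ramp_ge0.
Qed.

End RampSum.

Arguments ramp {R} c N k t.
Arguments ramp_sum {R} c N t.

Section SmallScale.
Context {R : realType} {phi : R -> R}.
Hypothesis phi_nonneg : forall t : R, 0 <= t -> 0 <= phi t.
Context {d} {X : measurableType d} (mu : {measure set X -> \bar R}).

Lemma integral_min_scaled_cvg0 {g : X -> nat} : measurable_fun setT g ->
  (\int[mu]_x (phi (g x)%:R)%:E < +oo)%E ->
  (\int[mu]_x (Num.min ((g x)%:R / j.+1%:R) (phi (g x)%:R))%:E)%E @[j --> \oo]
    --> 0%E.
Proof.
move=> mg phig_int; rewrite -(integral0 mu setT).
have min_ge0 j x : 0 <= Num.min ((g x)%:R / j.+1%:R) (phi (g x)%:R).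
  by rewrite le_min divr_ge0 ?phi_nonneg.
apply: (@dominated_cvg _ _ _ mu _ measurableT _ _ (fun x => (phi (g x)%:R)%:E)).
- move=> j; exact: (measurable_EFin_comp_nat _ (fun n => Num.min (n%:R / j.+1%:R) (phi n%:R)) mg).
- move=> x _; apply: cvg_EFin; first exact: nearW.
  apply: (@squeeze_cvgr _ _ _ _ (cst 0) (fun j => (g x)%:R * j.+1%:R^-1)).
  + by apply: nearW => j /=; rewrite min_ge0 ge_min lexx.
  + exact: cvg_cst.
  + by rewrite -[X in _ --> X](mulr0 ((g x)%:R : R)); exact: cvgMr cvg_harmonic.
- by [].
- apply/integrableP; split; first exact: (measurable_EFin_comp_nat _ (fun n => phi n%:R) mg).
  by under eq_integral do rewrite gee0_abs ?lee_fin ?phi_nonneg //.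
- by move=> j x _; rewrite gee0_abs ?lee_fin // ge_min lexx orbT.
Qed.

Lemma integral_min_scaled_small {I : finType} {g : I -> X -> nat} :
  (forall i, measurable_fun setT (g i)) ->
  (forall i, \int[mu]_x (phi (g i x)%:R)%:E < +oo)%E ->
  forall eps : R, 0 < eps -> exists2 eta : R, 0 < eta &
    forall r, 0 <= r <= eta -> forall i,
      (\int[mu]_x (Num.min ((g i x)%:R * r) (phi (g i x)%:R))%:E <= eps%:E)%E.
Proof.
move=> mg phig_int eps eps0.
have small i : \forall j \near \oo,
    (\int[mu]_x (Num.min ((g i x)%:R / j.+1%:R) (phi (g i x)%:R))%:E <= eps%:E)%E.
  have /fine_cvgP[fin cv] := integral_min_scaled_cvg0 (mg i) (phig_int i).
  apply: filterS2 fin (cvgr_lt _ cv _ eps0) => j finj ltj.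
  by rewrite -(fineK finj) lee_fin ltW.
have [J smallJ] := filter_ex (filter_forall _ small).
exists J.+1%:R^-1 => [|r /andP[r0 rJ] i]; first by rewrite invr_gt0.
apply: le_trans (smallJ i); apply: ge0_le_integral => //.
- by move=> x _; rewrite lee_fin le_min mulr_ge0 ?phi_nonneg.
- exact: (measurable_EFin_comp_nat _ (fun n => Num.min (n%:R * r) (phi n%:R)) (mg i)).
- exact: (measurable_EFin_comp_nat _
    (fun n => Num.min (n%:R / J.+1%:R) (phi n%:R)) (mg i)).
- by move=> x _; rewrite lee_fin le_min2 // ler_wpM2l.
Qed.

End SmallScale.

Lemma exists_breakpoints {R : realType} {phi : R -> R}
    (phi_nonneg : forall t : R, 0 <= t -> 0 <= phi t)
    (phi_incr : {in `[0, +oo[ &, forall s t : R, s < t -> phi s < phi t})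
    (phi_sublin : sublinear phi)
    {d} {X : measurableType d} (mu : {measure set X -> \bar R})
    {I : finType} {g : I -> X -> nat}
    (g_meas : forall i, measurable_fun setT (g i))
    (g_int : forall i, (\int[mu]_x (phi (g i x)%:R)%:E < +oo)%E) :
  exists N : nat -> nat, [/\ forall k, (k < N k)%N, forall k, (N k < N k.+1)%N,
    forall k, slope_record phi (N k),
    forall k, k.+1%:R * slope phi (N k) <= (2 ^ k.+1)%:R^-1 &
    forall k i, (\int[mu]_x (Num.min ((g i x)%:R * slope phi (N k)) (phi (g i x)%:R))%:E
                  <= ((k.+1%:R * (2 ^ k.+1)%:R)^-1)%:E)%E].
Proof.
pose eps k : R := (k.+1%:R * (2 ^ k.+1)%:R)^-1.
have eps_gt0 k : 0 < eps k by rewrite invr_gt0 mulr_gt0 ?ltr0n ?expn_gt0.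
have /choice[eta eta_spec] k : exists eta : R, 0 < eta /\
    forall r, 0 <= r <= eta -> forall i, (\int[mu]_x
      (Num.min ((g i x)%:R * r) (phi (g i x)%:R))%:E <= (eps k)%:E)%E.
  have [eta eta_gt0 small] := integral_min_scaled_small phi_nonneg mu g_meas g_int _ (eps_gt0 k).
  by exists eta.
have delta_gt0 k : 0 < Num.min (eta k) (eps k) by rewrite lt_min (eta_spec k).1 eps_gt0.
have [N [N_gt N_incr N_spec]] := increasing_choice
  (fun k N => slope phi N <= Num.min (eta k) (eps k) /\ slope_record phi N)
  (fun k P => exists_slope_record phi_nonneg phi_incr phi_sublin _ P (delta_gt0 k)).
have N_eta k : slope phi (N k) <= eta k by apply: le_trans (N_spec k).1 _; rewrite ge_min lexx.
have N_eps k : slope phi (N k) <= eps k.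
  by apply: le_trans (N_spec k).1 _; rewrite ge_min lexx orbT.
exists N; split => // [k|k|k i]; first exact: (N_spec k).2.
  apply: (@le_trans _ _ (k.+1%:R * eps k)); first exact: ler_wpM2l.
  by rewrite /eps invfM mulrA mulfV ?mul1r.
apply: (eta_spec k).2; rewrite N_eta andbT ltW //.
exact: slope_gt0 phi_nonneg phi_incr _ (leq_ltn_trans _ (N_gt k)).
Qed.

Section SlopeRamps.
Context {R : realType} {phi : R -> R}.
Hypothesis phi_nonneg : forall t : R, 0 <= t -> 0 <= phi t.
Hypothesis phi_incr : {in `[0, +oo[ &, forall s t : R, s < t -> phi s < phi t}.
Context {N : nat -> nat}.
Hypothesis N_gt : forall k, (k < N k)%N.
Hypothesis N_record : forall k, slope_record phi (N k).
Hypothesis N_slope : forall k, k.+1%:R * slope phi (N k) <= (2 ^ k.+1)%:R^-1.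

Definition slope_weight k := k.+1%:R * slope phi (N k).

Let psi := ramp_sum slope_weight (fun k => (N k)%:R).

Let N_gt0 k : (0 < N k)%N. Proof. exact: leq_ltn_trans (N_gt k). Defined.

Let N_gt0R k : 0 < (N k)%:R :> R. Proof. by rewrite ltr0n N_gt0. Defined.

Lemma slope_N_gt0 k : 0 < slope phi (N k).
Proof. exact: slope_gt0 phi_nonneg phi_incr _ (N_gt0 k). Qed.

Lemma slope_weight_gt0 k : 0 < slope_weight k.
Proof. by rewrite mulr_gt0 ?slope_N_gt0. Qed.

Lemma slope_weight_summable : (\sum_(k <oo) (slope_weight k)%:E < +oo)%E.
Proof.
apply: le_lt_trans (ltry 1); apply: le_trans (epsilon_trick0 xpredT ler01).
apply: lee_nneseries => [k _ _|k _]; first by rewrite lee_fin ltW ?slope_weight_gt0.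
by rewrite lee_fin div1r N_slope.
Qed.

Lemma slope_ramp_sum_ge_phi k : k.+1%:R * phi (N k)%:R <= psi (N k)%:R.
Proof.
apply: le_trans _ (ramp_le_sum slope_weight_gt0 N_gt0R slope_weight_summable k _ (ler0n _ _)).
by rewrite /ramp /slope_weight /slope minxx -mulrA divfK ?gt_eqF ?N_gt0R.
Qed.

Lemma slope_ramp_le k (n : nat) : ramp slope_weight (fun k => (N k)%:R) k n%:R <=
  k.+1%:R * Num.min (n%:R * slope phi (N k)) (phi n%:R).
Proof.
rewrite /ramp /slope_weight -mulrA; apply: ler_wpM2l => //.
exact (slope_record_ramp_le phi_nonneg phi_incr (N_gt0 k) (N_record k) n).
Qed.

Lemma integral_slope_ramp_sum_lt_pinfty {d} {X : measurableType d}
    (mu : {measure set X -> \bar R}) {g : X -> nat} :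
  measurable_fun setT g ->
  (forall k, \int[mu]_x (Num.min ((g x)%:R * slope phi (N k)) (phi (g x)%:R))%:E
               <= ((k.+1%:R * (2 ^ k.+1)%:R)^-1)%:E)%E ->
  (\int[mu]_x (psi (g x)%:R)%:E < +oo)%E.
Proof.
move=> mg small.
have ramp_N_ge0 j (t : R) : 0 <= t -> 0 <= ramp slope_weight (fun k => (N k)%:R) j t.
  exact: ramp_ge0 slope_weight_gt0 N_gt0R j t.
rewrite (integral_ramp_sum slope_weight_gt0 N_gt0R slope_weight_summable mu g mg).
apply: le_lt_trans (ltry 1); apply: le_trans (epsilon_trick0 xpredT ler01).
apply: lee_nneseries => [k _ _|k _].
  by apply: integral_ge0 => x _; rewrite lee_fin ramp_N_ge0.
pose m x := Num.min ((g x)%:R * slope phi (N k)) (phi (g x)%:R).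
have m_ge0 x : (0 <= (m x)%:E)%E.
  by rewrite lee_fin le_min mulr_ge0 ?phi_nonneg ?(ltW (slope_N_gt0 k)).
have m_meas : measurable_fun setT (fun x => (m x)%:E).
  exact: (measurable_EFin_comp_nat _
    (fun n => Num.min (n%:R * slope phi (N k)) (phi n%:R)) mg).
apply: (@le_trans _ _ (k.+1%:R%:E * \int[mu]_x (m x)%:E)%E).
  rewrite -ge0_integralZl_EFin //; apply: ge0_le_integral => //.
  - by move=> x _; rewrite lee_fin ramp_N_ge0.
  - exact: (measurable_EFin_comp_nat _
      (fun n => ramp slope_weight (fun k => (N k)%:R) k n%:R) mg).
  - exact: measurable_funeM.
  - by move=> x _; rewrite -EFinM lee_fin slope_ramp_le.
apply: le_trans (lee_wpmul2l _ (small k)) _; first by rewrite lee_fin.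
by rewrite -EFinM div1r invfM mulrA mulfV ?mul1r ?pnatr_eq0.
Qed.

Lemma slope_ramp_sum_littleo :
  littleo_along \oo (fun k => phi (N k)%:R) (fun k => psi (N k)%:R).
Proof.
move=> e e0; near=> k.
have ek : e^-1 <= k%:R by near: k; exact: (cvgryPge _).1 (@cvgr_idn R) e^-1.
have psi_ge0 := ramp_sum_ge0 slope_weight_gt0 N_gt0R slope_weight_summable.
rewrite !ger0_norm ?phi_nonneg ?psi_ge0 //.
apply: le_trans (ler_wpM2l (ltW e0) (slope_ramp_sum_ge_phi k)).
rewrite mulrA ler_peMl ?phi_nonneg //.
have ek1 : e^-1 <= k.+1%:R by apply: le_trans ek _; rewrite ler_nat.
by have := ler_wpM2l (ltW e0) ek1; rewrite mulfV ?gt_eqF.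
Unshelve. all: by end_near.
Qed.

End SlopeRamps.

Arguments slope_weight {R} phi N k.

Theorem lemma3p2 (R : realType) (phi : R -> R)
  (phi_nonneg : forall t : R, 0 <= t -> 0 <= phi t)
  (phi_cont : {within `[0, +oo[, continuous phi})
  (phi_sublin : sublinear phi)
  (phi_incr : {in `[0, +oo[ &, forall s t : R, s < t -> phi s < phi t})
  (l : nat) (hl : (1 <= l)%N)
  (d : measure_display) (X : measurableType d) (mu : probability X R)
  (f : 'I_l -> X -> nat)
  (f_meas : forall i : 'I_l, measurable_fun setT (f i))
  (f_int : forall i : 'I_l, (\int[mu]_x (phi (f i x)%:R)%:E < +oo)%E) :
  exists psi : R -> R,
    (forall t : R, 0 <= t -> 0 <= psi t) /\
    psi 0 = 0 /\
    subadditive_nonneg psi /\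
    {in `[0, +oo[ &, forall s t : R, s <= t -> psi s <= psi t} /\
    (forall t : R, 0 < t -> 0 < psi t) /\
    {in `]0, +oo[ &, forall s t : R, s <= t -> s / psi s <= t / psi t} /\
    (exists x : nat -> R,
        (forall k, 0 <= x k) /\
        (forall k, x k < x k.+1) /\
        (x @ \oo --> +oo) /\
        littleo_along \oo (fun k => phi (x k)) (fun k => psi (x k))) /\
    (forall i : 'I_l, (\int[mu]_x (psi (f i x)%:R)%:E < +oo)%E).
Proof.
have [N [N_gt N_incr N_record N_slope N_small]] :=
  exists_breakpoints phi_nonneg phi_incr phi_sublin mu f_meas f_int.
have w_gt0 := slope_weight_gt0 phi_nonneg phi_incr N_gt.
have N_gt0 k : 0 < (N k)%:R :> R by rewrite ltr0n (leq_ltn_trans _ (N_gt k)).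
have w_sum := slope_weight_summable phi_nonneg phi_incr N_gt N_slope.
exists (ramp_sum (slope_weight phi N) (fun k => (N k)%:R)).
split; first exact: ramp_sum_ge0 w_gt0 N_gt0 w_sum.
split; first exact: ramp_sum0 N_gt0.
split; first exact: ramp_sum_subadditive w_gt0 N_gt0 w_sum.
split; first exact: ramp_sum_le_mono w_gt0 N_gt0 w_sum.
split; first exact: ramp_sum_gt0 w_gt0 N_gt0 w_sum.
split; first exact: ramp_sum_ratio_le_mono w_gt0 N_gt0 w_sum.
split.
  exists (fun k => (N k)%:R); split => [k //|]; split => [k|]; first by rewrite ltr_nat.
  split; first by apply: natr_dominating_cvgy => k; exact: ltnW.
  exact (slope_ramp_sum_littleo phi_nonneg phi_incr N_gt N_slope).
move=> i; exact (integral_slope_ramp_sum_lt_pinfty phi_nonneg phi_incr N_gt N_record N_slope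
  mu (f_meas i) (N_small^~ i)).
Qed.
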